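(* For plane binary tree shapes $t$ let $S_t$, $T$ be as in the context. Then \[ \sum_{\substack{t \in \mathcal{B}_{\le n}\\ |t| < \log_4 n}} \left(1 - \frac{[z^n]S_t(z)}{[z^n]T(z)}\right) = \mathcal{O}\!\left(\frac{n}{(\log_4 n)^{3/2}}\right) \quad \text{as } n\to\infty . \]
   Context: A plane binary tree is a rooted tree in which each node has a left and a right slot, each empty or holding a subtree; $\mathcal{B}_{\le n}$ is the set of (unlabeled) plane binary trees with at most $n$ nodes, and $|t|$ is the number of nodes. A plane increasing binary tree of size $n$ is a plane binary tree whose $n$ nodes are labeled $1,\dots,n$ increasingly along every path from the root; their exponential generating function is $T(z)=z/(1-z)$, so $[z^n]T(z)=1$. A fringe subtree is a node with all its descendants; its shape is obtained by forgetting labels. For a shape $t$ with $k$ nodes, $\ell(t)$ is its number of increasing labelings (equal to $k!$ divided by the product of the sizes of all fringe subtrees of $t$) and $w(t)=\ell(t)/k!$. $S_t(z)$ is the exponential generating function of plane increasing binary trees having no fringe subtree of shape $t$; it is the power series solution of $S_t'(z)=(1+S_t(z))^2-w(t)kz^{k-1}$, $S_t(0)=0$. Thus $1-[z^n]S_t(z)/[z^n]T(z)$ is the probability that a uniformly random plane increasing binary tree of size $n$ has a fringe subtree of shape $t$. *)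

From mathcomp Require Import all_boot all_algebra.
From mathcomp Require Import reals exp.
Set Implicit Arguments. Unset Strict Implicit. Unset Printing Implicit Defensive.
Import GRing.Theory Num.Theory.
Local Open Scope ring_scope.

(* Plane binary trees: each node has a left and a right slot, each empty
   (Leaf = empty slot) or holding a subtree.  Leaf itself is the empty tree
   (0 nodes); genuine shapes are the Node _ _ values. *)
Inductive btree := Leaf | Node of btree & btree.

Fixpoint tsize (t : btree) : nat :=
  match t with Leaf => 0%N | Node l r => (tsize l + tsize r).+1 end.

Fixpoint hook (t : btree) : nat :=
  match t with Leaf => 1%N | Node l r => (hook l * hook r * tsize (Node l r))%N end.

(* l(t) = |t|! / prod of fringe subtree sizes : number of increasing labelings *)
Definition ell (t : btree) : nat := ((tsize t)`! %/ hook t)%N.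

Definition wt {R : fieldType} (t : btree) : R := (ell t)%:R / ((tsize t)`!)%:R.

(* All plane binary trees with exactly k nodes (fuel-based recursion on the
   size; fuel k suffices since subtrees are strictly smaller). *)
Fixpoint trees_fuel (fuel k : nat) : seq btree :=
  match k with
  | 0 => [:: Leaf]
  | k'.+1 =>
    match fuel with
    | 0 => [::]
    | f.+1 => flatten [seq [seq Node l r | l <- trees_fuel f i, r <- trees_fuel f (k' - i)]
                      | i <- iota 0 k'.+1]
    end
  end.

Definition trees_of_size (k : nat) : seq btree := trees_fuel k k.

(* [z^m] (1 + S(z))^2, where s m = [z^m] S(z). *)
Definition onep {R : nzRingType} (s : nat -> R) (i : nat) : R := (i == 0)%:R + s i.
Definition sq_coef {R : nzRingType} (s : nat -> R) (m : nat) : R :=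
  \sum_(i < m.+1) onep s i * onep s (m - i).

(* s is the coefficient sequence of the power series solution S_t of
   S_t'(z) = (1 + S_t(z))^2 - w(t) k z^(k-1),  S_t(0) = 0,  k = |t|,
   i.e. s m = [z^m] S_t(z) (the EGF coefficient). *)
Definition is_St_coef {R : fieldType} (t : btree) (s : nat -> R) : Prop :=
  (s 0%N = 0) /\ (forall m : nat, (m.+1)%:R * s m.+1 =
    sq_coef s m - (if m == (tsize t).-1 then wt t * (tsize t)%:R else 0)).

(* [z^n] T(z) for T(z) = z/(1-z). *)
Definition Tcoef {R : nzRingType} (n : nat) : R := if n == 0%N then 0 else 1.

Definition log4 {R : realType} (x : R) : R := ln x / ln 4.

From Pilot Require Import Defs.
From mathcomp Require Import all_boot all_algebra all_order.
From mathcomp Require Import reals exp.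
From mathcomp Require Import ring lra zify.
Set Implicit Arguments. Unset Strict Implicit. Unset Printing Implicit Defensive.
Import Order.TTheory GRing.Theory Num.Theory.
Local Open Scope ring_scope.

(* The shapes of size k are counted by the Catalan number C_k, and every
   summand 1 - [z^n]S_t / [z^n]T lies in [0, 1]: by induction on the
   recurrence, [z^m]S_t = 1 for 0 < m < |t|, [z^|t|]S_t = 1 - w(t), and all
   coefficients stay in [0, 1].  So with j = floor(log4 n) the sum is at most
   C_1 + ... + C_j <= 2 C_j, as C_{k+1} >= 2 C_k.  The recurrence
   (k + 2) C_{k+1} = (4k + 2) C_k gives C_j^2 (j + 1)^3 <= 16^j, whence
   C_j (log4 n)^(3/2) <= C_j (j + 1)^(3/2) <= 4^j <= n. *)

Lemma trees_fuelSS f k : trees_fuel f.+1 k.+1 =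
  flatten [seq [seq Node l r | l <- trees_fuel f i, r <- trees_fuel f (k - i)]
          | i <- iota 0 k.+1].
Proof. by []. Qed.

Lemma trees_fuel_enough f g k : (k <= f)%N -> (k <= g)%N ->
  trees_fuel f k = trees_fuel g k.
Proof.
elim: f g k => [|f IHf] [|g] [|k] // kf kg.
rewrite !trees_fuelSS; congr flatten; apply/eq_in_map => i.
rewrite mem_iota add0n => /andP[_ ik].
by rewrite (IHf g i) 1?(IHf g (k - i)%N) //; lia.
Qed.

Definition ntrees (k : nat) : nat := size (trees_of_size k).

Lemma ntrees0 : ntrees 0 = 1%N. Proof. by []. Qed.

Lemma ntreesS k : ntrees k.+1 = (\sum_(i < k.+1) ntrees i * ntrees (k - i))%N.
Proof.
rewrite /ntrees /trees_of_size trees_fuelSS size_flatten /shape -map_comp sumnE.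
rewrite big_map -(subn0 k.+1) -/(index_iota 0 k.+1) big_mkord.
apply: eq_bigr => i _ /=; rewrite size_allpairs.
have ik : (i <= k)%N by rewrite -ltnS.
rewrite (@trees_fuel_enough k i i) 1?(@trees_fuel_enough k (k - i) (k - i)) //.
all: lia.
Qed.

Definition vanishes_below {R : nzRingType} (m : nat) (p : {poly R}) :=
  forall i, (i < m)%N -> p`_i = 0.

Section VanishesBelow.
Variables (R : nzRingType) (m : nat).

Lemma vanishes_belowD (p q : {poly R}) :
  vanishes_below m p -> vanishes_below m q -> vanishes_below m (p + q).
Proof. by move=> p0 q0 i im; rewrite coefD p0 ?q0 ?addr0. Qed.

Lemma vanishes_belowMr (p q : {poly R}) :
  vanishes_below m p -> vanishes_below m (p * q).
Proof.
move=> p0 i im; rewrite coefM big1 // => j _.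
by rewrite p0 ?mul0r // (leq_ltn_trans _ im) // -ltnS.
Qed.

Lemma vanishes_belowXM (p : {poly R}) :
  vanishes_below m p -> vanishes_below m.+1 ('X * p).
Proof. by move=> p0 [|i] im; rewrite coefXM // p0. Qed.

Lemma vanishes_below_deriv (p : {poly R}) :
  vanishes_below m.+1 p -> vanishes_below m p^`().
Proof. by move=> p0 i im; rewrite coef_deriv p0 ?mul0rn. Qed.

End VanishesBelow.

Lemma coef_Xderiv (R : nzRingType) (p : {poly R}) i :
  ('X * p^`())`_i = p`_i *+ i.
Proof. by case: i => [|i]; rewrite coefXM ?mulr0n // coef_deriv. Qed.

Section CatalanRecurrence.
Variable c : nat -> nat.
Hypothesis c0 : c 0 = 1%N.
Hypothesis cS : forall k, c k.+1 = (\sum_(i < k.+1) c i * c (k - i))%N.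

Lemma catalan_ratio k : (k.+2 * c k.+1 = (4 * k + 2) * c k)%N.
Proof.
pose P : {poly int} := \poly_(i < k.+2) (c i)%:R.
pose E := P - 1 - 'X * P ^+ 2.
have E0 : vanishes_below k.+2 E.
  move=> i ik; rewrite !coefB coefXM coef1 coef_poly ik.
  case: i ik => [|i] ik /=; first by rewrite c0 subrr.
  rewrite subr0 cS natr_sum expr2 coefM; apply/eqP; rewrite subr_eq0.
  apply/eqP/eq_bigr => j _.
  by rewrite !coef_poly natrM !ifT //; have := ltn_ord j; lia.
pose T := 'X * P^`() - 'X * ('X * P^`()) *+ 4 + P - 1 - ('X * P) *+ 2.
have T0 : vanishes_below k.+2 T.
  (* T = 0 is the differential equation X (1 - 4X) C' = 1 - C + 2 X C
     satisfied by the solution C of E = 0, i.e. C = 1 + X C^2. *)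
  have -> : T = E * (1 + ('X * P) *+ 2 + ('X * ('X * P^`())) *+ 4)
                + 'X * (E^`() * (1 - ('X * P) *+ 2)).
    by rewrite /E !derivB derivM derivX derivM -polyC1 derivC /T; ring.
  apply: vanishes_belowD; first exact: vanishes_belowMr.
  by apply/vanishes_belowXM/vanishes_belowMr/vanishes_below_deriv.
have := T0 k.+1 (ltnSn _).
rewrite /T !(coefMn, coefB, coefD, coefN) coef_Xderiv coefXM coef_Xderiv.
rewrite coefXM coef1 !coef_poly /=.
rewrite ltnSn (ltnW (ltnSn k.+1)) => T0k.
apply/eqP; rewrite -(eqr_nat int) -subr_eq0 -T0k !natrM !natrD.
apply/eqP; ring.
Qed.

End CatalanRecurrence.

Lemma ntrees_ratio k : (k.+2 * ntrees k.+1 = (4 * k + 2) * ntrees k)%N.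
Proof. exact: catalan_ratio ntrees0 ntreesS k. Qed.

Section CatalanBounds.
Variable c : nat -> nat.
Hypothesis c0 : c 0 = 1%N.
Hypothesis c_ratio : forall k, (k.+2 * c k.+1 = (4 * k + 2) * c k)%N.

(* The factor [3k + 1], rather than [k + 1], is what makes the induction go
   through: [(4k + 2)^2 (3k + 4) <= 16 (k + 1)^2 (3k + 1)]. *)
Lemma catalan_sq_bound_strong k : (c k ^ 2 * k.+1 ^ 2 * (3 * k + 1) <= 16 ^ k)%N.
Proof.
elim: k => [|k IHk]; first by rewrite c0.
have -> : (c k.+1 ^ 2 * k.+2 ^ 2 * (3 * k.+1 + 1)
           = (4 * k + 2) ^ 2 * (3 * k + 4) * c k ^ 2)%N.
  have -> : (3 * k.+1 + 1 = 3 * k + 4)%N by lia.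
  by rewrite -expnMn (mulnC (c k.+1)) c_ratio expnMn mulnAC.
rewrite (expnS 16); apply: leq_trans _ (leq_mul (leqnn 16) IHk); nia.
Qed.

Lemma catalan_sq_bound k : (c k ^ 2 * k.+1 ^ 3 <= 16 ^ k)%N.
Proof.
apply: leq_trans _ (catalan_sq_bound_strong k).
by rewrite (expnSr k.+1) mulnA leq_mul2l; apply/orP; right; lia.
Qed.

Lemma catalan_double k : (0 < k)%N -> (2 * c k <= c k.+1)%N.
Proof.
move=> k_gt0; rewrite -(@leq_pmul2l k.+2) // c_ratio mulnCA mulnA leq_mul2r.
by apply/orP; right; lia.
Qed.

End CatalanBounds.

Lemma sum_doubling_le (f : nat -> nat) :
  (forall k, (0 < k)%N -> (2 * f k <= f k.+1)%N) ->
  forall j, (\sum_(1 <= k < j.+1) f k <= 2 * f j)%N.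
Proof.
move=> f_double; elim=> [|j IHj]; first by rewrite big_geq.
rewrite big_nat_recr //=; case: j IHj => [|j] IHj; first by rewrite big_geq //; lia.
by have := f_double j.+1 isT; lia.
Qed.

Lemma leq_sum_nat_prefix (P : pred nat) (f : nat -> nat) m n j :
  (forall k, P k -> (k <= j)%N) ->
  (\sum_(m <= k < n | P k) f k <= \sum_(m <= k < j.+1) f k)%N.
Proof.
move=> Pj; rewrite (big_nat_widen _ _ _ _ _ (leq_maxl n j.+1)).
rewrite [X in (_ <= X)%N](big_nat_widen _ _ _ _ _ (leq_maxr n j.+1)).
rewrite big_mkcond [X in (_ <= X)%N]big_mkcond /=.
apply: leq_sum => k _; case Pk: (P k) => //=.
by rewrite ltnS Pj //; case: ifP.
Qed.

Lemma onep_Tcoef (R : nzRingType) i : onep (@Tcoef R) i = 1.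
Proof. by rewrite /onep /Tcoef; case: (i == 0%N); rewrite ?addr0 ?add0r. Qed.

Lemma sq_coef_Tcoef (R : nzRingType) m : sq_coef (@Tcoef R) m = m.+1%:R.
Proof.
rewrite /sq_coef; under eq_bigr do rewrite !onep_Tcoef mulr1.
by rewrite sumr_const card_ord.
Qed.

Lemma eq_sq_coef (R : nzRingType) (s1 s2 : nat -> R) m :
  (forall i, (i <= m)%N -> s1 i = s2 i) -> sq_coef s1 m = sq_coef s2 m.
Proof.
move=> s12; apply: eq_bigr => i _; have im : (i <= m)%N by rewrite -ltnS.
by rewrite /onep !s12 // leq_subr.
Qed.

Lemma sq_coef_bounds (R : numDomainType) (s : nat -> R) m :
  s 0 = 0 -> (forall i, (i <= m)%N -> 0 <= s i <= 1) ->
  0 <= sq_coef s m <= m.+1%:R.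
Proof.
move=> s0 s01.
have onep01 i : (i <= m)%N -> 0 <= onep s i <= 1.
  case: i => [|i] im; rewrite /onep /= ?mulr1n ?mulr0n.
    by rewrite s0 addr0 ler01 lexx.
  by rewrite add0r s01.
rewrite -[m.+1]card_ord -sumr_const; apply/andP; split.
  apply: sumr_ge0 => i _.
  have /andP[? _] := onep01 i (ltnSE (ltn_ord i)).
  by have /andP[? _] := onep01 (m - i)%N (leq_subr _ _); apply: mulr_ge0.
apply: ler_sum => i _; rewrite -[1]mulr1.
have /andP[? ?] := onep01 i (ltnSE (ltn_ord i)).
by have /andP[? ?] := onep01 (m - i)%N (leq_subr _ _); apply: ler_pM.
Qed.

Lemma wt_ge0 (R : numFieldType) t : 0 <= wt t :> R.
Proof. exact: divr_ge0. Qed.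

Lemma wt_le1 (R : numFieldType) t : wt t <= 1 :> R.
Proof.
by rewrite /wt ler_pdivrMr ?ltr0n ?fact_gt0 // mul1r ler_nat leq_div.
Qed.

Section StCoefficients.
Variables (R : realFieldType) (t : btree) (s : nat -> R).
Hypothesis St_s : is_St_coef t s.

Lemma St_coef_Tcoef i : (i < Defs.tsize t)%N -> s i = Tcoef i.
Proof.
case: St_s => s0 s_rec; elim/ltn_ind: i => [[|m]] // IHm mt.
have := s_rec m; rewrite ifN; last by apply/eqP; lia.
rewrite subr0 (@eq_sq_coef _ _ Tcoef) => [|i im]; last by apply: IHm; lia.
rewrite sq_coef_Tcoef /Tcoef /= -{2}[m.+1%:R]mulr1 => /mulfI; apply.
by rewrite pnatr_eq0.
Qed.

Lemma St_coef_bounds m : 0 <= s m <= 1.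
Proof.
case: St_s => s0 s_rec; elim/ltn_ind: m => [[|m]] IHm; first by rewrite s0 lexx ler01.
have m1_gt0 : 0 < m.+1%:R :> R by rewrite ltr0n.
have /andP[sq_ge0 sq_le] := sq_coef_bounds s0 IHm.
have := s_rec m; case: (eqVneq (Defs.tsize t) m.+1) => [tm | tm].
  rewrite tm eqxx (@eq_sq_coef _ _ Tcoef) => [|i im]; last first.
    by apply: St_coef_Tcoef; rewrite tm.
  rewrite sq_coef_Tcoef => sm.
  have := wt_ge0 R t; have := wt_le1 R t; nra.
rewrite (_ : (if _ then _ else _) = 0) ?subr0 => [sm|]; first nra.
case: ifP => // /eqP; case: (Defs.tsize t) tm => [|k] tm /= mk; first by rewrite mulr0.
by rewrite mk eqxx in tm.
Qed.

End StCoefficients.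

Lemma St_ratio_bounds (R : realFieldType) t (s : nat -> R) n :
  is_St_coef t s -> 0 <= 1 - s n / Tcoef n <= 1.
Proof.
move=> /St_coef_bounds s01; rewrite /Tcoef; case: ifP => _.
  by rewrite invr0 mulr0 subr0 ler01 lexx.
by have /andP[? ?] := s01 n; rewrite divr1 subr_ge0 lerBlDr lerDl; apply/andP.
Qed.

Lemma sum_St_ratio_bounds (R : realFieldType) (S : btree -> nat -> R) k n :
  (forall t, is_St_coef t (S t)) ->
  0 <= \sum_(t <- trees_of_size k) (1 - S t n / Tcoef n) <= (ntrees k)%:R.
Proof.
move=> St_S; rewrite /ntrees -sum1_size natr_sum; apply/andP; split.
  by apply: sumr_ge0 => t _; have /andP[] := St_ratio_bounds n (St_S t).
by apply: ler_sum => t _; have /andP[] := St_ratio_bounds n (St_S t).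
Qed.

Lemma sum_ntrees_below_le (R : archiNumDomainType) (x : R) n : 0 <= x ->
  (\sum_(1 <= k < n | (k%:R < x)%R) ntrees k <= 2 * ntrees (Num.truncn x))%N.
Proof.
move=> x_ge0.
apply: leq_trans _ (sum_doubling_le (catalan_double ntrees0 ntrees_ratio) _).
by apply: leq_sum_nat_prefix => k /ltW; rewrite truncn_ge_nat.
Qed.

Lemma powR_3half_sqr (R : realType) (x : R) : 0 <= x ->
  (x `^ (3%:R / 2%:R)) ^+ 2 = x ^+ 3.
Proof.
move=> x_ge0; rewrite -powR_mulrn ?powR_ge0 // -powRrM.
by rewrite divfK ?pnatr_eq0 // powR_mulrn.
Qed.

Lemma ntrees_mul_powR_le (R : realType) j (x : R) : 0 <= x <= j.+1%:R ->
  (ntrees j)%:R * x `^ (3%:R / 2%:R) <= (4 ^ j)%:R.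
Proof.
move=> /andP[x_ge0 x_le].
rewrite -(ler_pXn2r (_ : 0 < 2)%N) ?nnegrE ?mulr_ge0 ?powR_ge0 //.
rewrite exprMn powR_3half_sqr // -!natrX -expnM mulnC expnM.
apply: le_trans (_ : ((ntrees j ^ 2 * j.+1 ^ 3)%N%:R <= _)); last first.
  by rewrite ler_nat (catalan_sq_bound ntrees0 ntrees_ratio).
by rewrite natrM !natrX ler_wpM2l ?exprn_ge0 ?ler0n // lerXn2r ?nnegrE ?ler0n.
Qed.

Lemma log4_ge_nat (R : realType) (x : R) j : 0 < x ->
  (j%:R <= log4 x) = ((4 ^ j)%:R <= x).
Proof.
move=> x_gt0; have ln4_gt0 : 0 < ln (4 : R) by rewrite ln_gt0 // ltr1n.
rewrite /log4 ler_pdivlMr // mulr_natl -lnXn ?ltr0n // natrX.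
by rewrite ler_ln ?posrE ?exprn_gt0 ?ltr0n.
Qed.

Theorem proposition3p7 (R : realType) (S : btree -> nat -> R)
  (HS : forall t : btree, is_St_coef t (S t)) :
  exists (C : R) (N : nat), forall n : nat, (N <= n)%N ->
    `| \sum_(1 <= k < n.+1 | (k%:R < log4 (n%:R : R)))
         \sum_(t <- trees_of_size k) (1 - S t n / Tcoef n) |
    <= C * (n%:R / (log4 (n%:R : R)) `^ (3%:R / 2%:R)).
Proof.
exists 2, 2%N => n n_ge2; set L := log4 (n%:R : R).
have n_gt0 : 0 < n%:R :> R by rewrite ltr0n; lia.
have L_gt0 : 0 < L by rewrite divr_gt0 ?ln_gt0 ?ltr1n //; lia.
set j := Num.truncn L; have /andP[jL Lj] := truncn_itv (ltW L_gt0).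
rewrite ger0_norm; last first.
  by apply: sumr_ge0 => k _; have /andP[] := sum_St_ratio_bounds k n HS.
apply: le_trans (_ : (2 * ntrees j)%:R <= _).
  apply: le_trans (_ : (\sum_(1 <= k < n.+1 | (k%:R < L)%R) ntrees k)%:R <= _).
    rewrite natr_sum; apply: ler_sum => k _.
    by have /andP[] := sum_St_ratio_bounds k n HS.
  by rewrite ler_nat sum_ntrees_below_le // ltW.
rewrite natrM ler_pM2l // ler_pdivlMr ?powR_gt0 //.
apply: le_trans (ntrees_mul_powR_le _) _; first by rewrite (ltW L_gt0) ltW.
by rewrite -log4_ge_nat.
Qed.
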